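(* Let $G=(V,E)$ be a Generalized Bartlett graph with $|V|=p$, and let $\sigma$ be a Generalized Bartlett ordering for $G$. Suppose $\Omega\in\mathbb{P}_{G_\sigma}$ follows a generalized $G$-Wishart distribution with parameters $U$ and $\boldsymbol\delta$, where $U$ is positive definite and $\delta_i>0$ for all $i$. Let $\Omega=LDL^T$ be the modified Cholesky decomposition and define $\widetilde D_1=D_1$, $\widetilde D_k=D_k/D_{k-1}$ for $k\ge2$. Then (i) for every independent entry $L_{ij}$ ($i>j$, $(i,j)\in E_\sigma$), the conditional distribution of $L_{ij}$ given all other entries of $L_I$ and $\widetilde D=(\widetilde D_1,\dots,\widetilde D_p)$ is univariate normal; (ii) for every $k$, the conditional distribution of $\widetilde D_k$ given $L_I$ and $\{\widetilde D_{k'}\}_{k'\neq k}$ is either a Generalized Inverse Gaussian or a Gamma distribution.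
   Context: For an undirected graph $G=(V,E)$ with $|V|=p$ and an ordering $\sigma$ (a bijection $V\to\{1,\dots,p\}$), the ordered graph $G_\sigma$ has vertex set $\{1,\dots,p\}$ and edge set $E_\sigma=\{(i,j):(\sigma^{-1}(i),\sigma^{-1}(j))\in E\}$. $\mathbb{P}_{G_\sigma}$ is the set of $p\times p$ symmetric positive definite $\Omega$ with $\Omega_{ij}=0$ for $i\ne j$, $(i,j)\notin E_\sigma$. Modified Cholesky: $\Omega=LDL^T$, $L$ unit lower triangular, $D=\mathrm{diag}(D_1,\dots,D_p)$, $D_i>0$. $L_I=\{L_{ij}:i>j,(i,j)\in E_\sigma\}$; $\Omega\mapsto(L_I,D)$ is a bijection $\mathbb{P}_{G_\sigma}\to\mathbb{R}^{|L_I|}\times(0,\infty)^p$. The generalized $G$-Wishart distribution with parameters $U,\boldsymbol\delta$ has density on $\mathbb{P}_{G_\sigma}$ proportional to $\prod_i D_i^{\delta_i/2}\exp(-\tfrac12\mathrm{tr}(\Omega U))$ (Lebesgue measure on free entries of $\Omega$). Triangulation: given $\sigma$, set $E^\sigma_0=E$ and for $i=1,\dots,p-2$ let $E^\sigma_i=E^\sigma_{i-1}\cup\{\{u,v\}: u\ne v,\ \sigma(u)>i,\ \sigma(v)>i,\ \{u,\sigma^{-1}(i)\}\in E^\sigma_{i-1},\ \{v,\sigma^{-1}(i)\}\in E^\sigma_{i-1}\}$; put $D^\sigma(E)=E^\sigma_{p-2}$. $G$ is a Generalized Bartlett graph if there is an ordering $\sigma$ (a Generalized Bartlett ordering) such that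 there are no vertices $u,v,w$ with $\{u,v\},\{v,w\},\{u,w\}\notin E$ but $\{u,v\},\{v,w\},\{u,w\}\in D^\sigma(E)$. A Generalized Inverse Gaussian distribution on $(0,\infty)$ has density proportional to $x^{\alpha}\exp(-a x-b/x)$ with $a,b>0$. *)

From HB Require Import structures.
From mathcomp Require Import all_boot all_order all_algebra all_fingroup.
From mathcomp Require Import all_classical all_reals all_analysis.
Set Implicit Arguments. Unset Strict Implicit. Unset Printing Implicit Defensive.
Import Order.TTheory GRing.Theory Num.Theory.
Local Open Scope ring_scope.

(* Triangulation E^sigma_n (0-based step counter):
   fill_iter 0 = E, and step k.+1 (the paper's step i = k+1) eliminates the vertex
   w with sigma w = k (0-based, i.e. sigma^{-1}(i) 1-based) and joins every two
   distinct neighbours u, v of w with sigma u, sigma v > k (0-based, i.e. > i 1-based). *)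
Fixpoint fill_iter (V : finType) (p : nat) (sigma : V -> 'I_p) (E : rel V) (n : nat)
  : rel V :=
  match n with
  | 0 => E
  | k.+1 =>
      let Ek := fill_iter sigma E k in
      fun u v => Ek u v ||
        [&& u != v, (k < sigma u)%N, (k < sigma v)%N &
            [exists w, [&& (sigma w == k :> nat), Ek u w & Ek v w]]]
  end.

Definition Dsig (V : finType) (p : nat) (sigma : V -> 'I_p) (E : rel V) : rel V :=
  fill_iter sigma E (p - 2).

Definition GB_ordering (V : finType) (p : nat) (sigma : V -> 'I_p) (E : rel V) : Prop :=
  ~ exists u v w : V,
      [&& ~~ E u v, ~~ E v w, ~~ E u w,
          Dsig sigma E u v, Dsig sigma E v w & Dsig sigma E u w].

Definition GB_graph (V : finType) (p : nat) (E : rel V) : Prop :=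
  exists sigma : V -> 'I_p, bijective sigma /\ GB_ordering sigma E.

Definition Esig (V : finType) (p : nat) (sigma : V -> 'I_p) (E : rel V) : rel 'I_p :=
  fun i j => [exists u, exists v, [&& sigma u == i, sigma v == j & E u v]].

Definition freeL (V : finType) (p : nat) (sigma : V -> 'I_p) (E : rel V) (i j : 'I_p)
  : bool := (j < i)%N && Esig sigma E i j.

Definition posdef (R : realType) (p : nat) (A : 'M[R]_p) : Prop :=
  A^T = A /\ forall v : 'cV[R]_p, v != 0 -> 0 < (v^T *m A *m v) 0 0.

Definition PG (R : realType) (V : finType) (p : nat) (sigma : V -> 'I_p) (E : rel V)
  (Om : 'M[R]_p) : Prop :=
  posdef Om /\ forall i j : 'I_p, i != j -> ~~ Esig sigma E i j -> Om i j = 0.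

(* D_k = Dtilde_1 * ... * Dtilde_k *)
Definition Dof (R : realType) (p : nat) (dt : 'I_p -> R) (k : 'I_p) : R :=
  \prod_(m < p | (m <= k)%N) dt m.

(* Column-by-column completion of the unit lower triangular L: free entries are
   taken from x, the other sub-diagonal entries are forced by Omega_ij = 0. *)
Fixpoint Lstep (R : realType) (p : nat) (F : rel 'I_p) (x : 'I_p -> 'I_p -> R)
  (D : 'I_p -> R) (n : nat) : 'I_p -> 'I_p -> R :=
  match n with
  | 0 => fun i j => if i == j then 1 else 0
  | n'.+1 =>
      let L := Lstep F x D n' in
      fun i j =>
        if (nat_of_ord j == n') && (j < i)%N then
          (if F i j then x i j
           else - (\sum_(k < p | (k < j)%N) L i k * D k * L j k) / D j)
        else L i j
  end.

Definition Lmat (R : realType) (V : finType) (p : nat) (sigma : V -> 'I_p) (E : rel V)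
  (x : 'I_p -> 'I_p -> R) (dt : 'I_p -> R) : 'M[R]_p :=
  \matrix_(i, j) Lstep (Esig sigma E) x (Dof dt) p i j.

Definition Omega_of (R : realType) (V : finType) (p : nat) (sigma : V -> 'I_p)
  (E : rel V) (x : 'I_p -> 'I_p -> R) (dt : 'I_p -> R) : 'M[R]_p :=
  Lmat sigma E x dt *m diag_mx (\row_k Dof dt k) *m (Lmat sigma E x dt)^T.

Definition Cidx (p : nat) : finType := ('I_p * 'I_p + 'I_p)%type.

(* active coordinates: inl (i,j) <-> L_ij in L_I ; inr k <-> Dtilde_k.
   Same index set for the free entries of Omega: inl (i,j) <-> Omega_ij (i>j edge),
   inr k <-> Omega_kk. *)
Definition active (V : finType) (p : nat) (sigma : V -> 'I_p) (E : rel V)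
  (c : Cidx p) : bool :=
  match c with inl ij => freeL sigma E ij.1 ij.2 | inr _ => true end.

Definition updL (R : realType) (p : nat) (x : 'I_p -> 'I_p -> R) (i j : 'I_p) (t : R) :=
  fun a b => if (a == i) && (b == j) then t else x a b.

Definition updD (R : realType) (p : nat) (dt : 'I_p -> R) (k : 'I_p) (t : R) :=
  fun a => if a == k then t else dt a.

Definition coord_upd (R : realType) (p : nat)
  (y : ('I_p -> 'I_p -> R) * ('I_p -> R)) (c : Cidx p) (t : R) :=
  match c with
  | inl ij => (updL y.1 ij.1 ij.2 t, y.2)
  | inr k => (y.1, updD y.2 k t)
  end.

Definition coord_val (R : realType) (p : nat)
  (y : ('I_p -> 'I_p -> R) * ('I_p -> R)) (c : Cidx p) : R :=
  match c with inl ij => y.1 ij.1 ij.2 | inr k => y.2 k end.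

Definition out_val (R : realType) (p : nat) (Om : 'M[R]_p) (c : Cidx p) : R :=
  match c with inl ij => Om ij.1 ij.2 | inr k => Om k k end.

Definition detF (R : realType) (T : finType) (M : T -> T -> R) : R :=
  \sum_(s : {perm T}) (-1) ^+ s * \prod_(a : T) M a (s a).

Definition jac (R : realType) (V : finType) (p : nat) (sigma : V -> 'I_p) (E : rel V)
  (y : ('I_p -> 'I_p -> R) * ('I_p -> R))
  (a b : {c : Cidx p | active sigma E c}) : R :=
  derive1 (fun t => out_val (Omega_of sigma E (coord_upd y (val b) t).1
                                      (coord_upd y (val b) t).2) (val a))
    (coord_val y (val b)).

(* Unnormalised joint density of (L_I, Dtilde) induced by the generalized
   G-Wishart density  prod_i D_i^{delta_i/2} exp(-tr(Omega U)/2)  on P_{G_sigma}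
   (Lebesgue measure on the free entries of Omega), via change of variables. *)
Definition gw_density (R : realType) (V : finType) (p : nat) (sigma : V -> 'I_p)
  (E : rel V) (U : 'M[R]_p) (delta : 'I_p -> R)
  (y : ('I_p -> 'I_p -> R) * ('I_p -> R)) : R :=
  (\prod_(k < p) (Dof y.2 k) `^ (delta k / 2))
  * expR (- (\tr (Omega_of sigma E y.1 y.2 *m U)) / 2)
  * `| detF (@jac R V p sigma E y) |.

From HB Require Import structures.
From mathcomp Require Import all_boot all_order all_algebra all_fingroup.
From mathcomp Require Import all_classical all_reals all_analysis.
From mathcomp Require Import zify ring lra.
Import Order.TTheory GRing.Theory Num.Theory.
Local Open Scope ring_scope.

Set Implicit Arguments. Unset Strict Implicit. Unset Printing Implicit Defensive.

(* Fix all coordinates but one.  Then every entry L_ab of the unit lower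
   triangular factor is an affine function of the free coordinate L_ij, resp. of
   1/t for t = Dtilde_k.  Column by column, L_ab is determined by the products
   L_am D_m L_bm with m < b, and two non-constant factors could only meet if
   (a,b), (a,m), (b,m) were three non-edges all filled in by the triangulation,
   which the Generalized Bartlett property forbids.  Hence
   tr(Omega U) = sum_m D_m L_.m^T U L_.m is a quadratic polynomial in L_ij with
   positive leading coefficient, resp. of the form A t + C + B / t with
   A > 0 <= B, while the Jacobian of Omega |-> (L_I, Dtilde) is triangular with
   monomial diagonal. *)

Section CompletedFactor.
Variables (R : realType) (p : nat) (F : rel 'I_p).
Implicit Types (x : 'I_p -> 'I_p -> R) (D : 'I_p -> R).

Lemma Lstep_ge x D n (i j : 'I_p) : (n <= j)%N ->
  Lstep F x D n i j = if i == j then 1 else 0.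
Proof.
elim: n => [//|n IH] Hn /=.
have -> : (nat_of_ord j == n) = false by apply/eqP => E; rewrite E ltnn in Hn.
by rewrite /= IH // ltnW.
Qed.

Lemma Lstep_lt x D n (i j : 'I_p) : (j < n)%N ->
  Lstep F x D n i j = Lstep F x D j.+1 i j.
Proof.
elim: n => [//|n IH] Hn.
case: (eqVneq (nat_of_ord j) n) => [<-//|Hjn].
simpl; rewrite (negbTE Hjn) /= IH //.
by move: Hn; rewrite ltnS leq_eqVlt (negbTE Hjn).
Qed.

Definition Lfull x D := Lstep F x D p.

Lemma Lfull_rec x D (i j : 'I_p) : Lfull x D i j =
  if i == j then 1 else if (j < i)%N then
    (if F i j then x i j
     else - (\sum_(k < p | (k < j)%N) Lfull x D i k * D k * Lfull x D j k) / D j)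
  else 0.
Proof.
rewrite /Lfull Lstep_lt //= eqxx /=.
case: (eqVneq i j) => [->|Hij]; first by rewrite ltnn Lstep_ge // eqxx.
case: ifP => Hji; last by rewrite Lstep_ge // (negbTE Hij).
case: (F i j) => //; congr (- _ / _); apply: eq_bigr => k Hk.
by rewrite !(Lstep_lt x D (n := j)) // !(Lstep_lt x D (n := p)).
Qed.

Lemma Lfull_diag x D (i : 'I_p) : Lfull x D i i = 1.
Proof. by rewrite Lfull_rec eqxx. Qed.

Lemma Lfull_upper x D (i j : 'I_p) : (i < j)%N -> Lfull x D i j = 0.
Proof.
move=> Hij; rewrite Lfull_rec ltnNge ltnW //.
by have -> : (i == j) = false by apply/negbTE; rewrite neq_ltn Hij.
Qed.

Lemma Lfull_local x x' D D' (n : nat) :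
  (forall u v : 'I_p, (v < n)%N -> x u v = x' u v) ->
  (forall m : 'I_p, (m < n)%N -> D m = D' m) ->
  forall a b : 'I_p, (b < n)%N -> Lfull x D a b = Lfull x' D' a b.
Proof.
move=> Hx HD.
suff H : forall k (a b : 'I_p), (b < k)%N -> (b < n)%N ->
    Lfull x D a b = Lfull x' D' a b.
  by move=> a b Hb; apply: H (ltnSn _) Hb.
elim=> [//|k IH] a b Hbk Hbn.
rewrite (Lfull_rec x D) (Lfull_rec x' D') Hx // HD //.
case: ifP => // _; case: ifP => // _; case: ifP => // _.
congr (- _ / _); apply: eq_bigr => m Hm.
by rewrite !IH ?HD //; move: Hm Hbk Hbn; lia.
Qed.

Lemma Lfull_local_col x x' D D' (a b : 'I_p) :
  (forall u v : 'I_p, (v < b)%N -> x u v = x' u v) -> x a b = x' a b ->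
  (forall m : 'I_p, (m <= b)%N -> D m = D' m) ->
  Lfull x D a b = Lfull x' D' a b.
Proof.
move=> Hx Hab HD.
have HD' (m : 'I_p) : (m < b)%N -> D m = D' m by move=> Hm; apply/HD/ltnW.
rewrite (Lfull_rec x D) (Lfull_rec x' D') Hab HD //.
case: ifP => // _; case: ifP => // _; case: ifP => // _.
congr (- _ / _); apply: eq_bigr => m Hm.
by rewrite HD' // !(Lfull_local Hx HD').
Qed.

End CompletedFactor.

Section Triangulation.
Variables (V : finType) (p : nat) (sigma : V -> 'I_p) (E : rel V).
Hypothesis sigma_inj : injective sigma.

Lemma fill_iter_mono n n' u v : (n <= n')%N ->
  fill_iter sigma E n u v -> fill_iter sigma E n' u v.
Proof.
move=> /subnKC <-; elim: (n' - n)%N => [|k IH]; first by rewrite addn0.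
by move=> H; rewrite addnS /= IH.
Qed.

(* Edges at w are only created while w is not yet eliminated. *)
Lemma fill_iter_min n u w : fill_iter sigma E n u w ->
  fill_iter sigma E (minn n (sigma w)) u w.
Proof.
elim: n => [|n IH] H; first by rewrite min0n.
case: (leqP (sigma w) n) => Hw; last by rewrite (minn_idPl Hw).
rewrite (minn_idPr (leqW Hw)).
case/orP: H => [/IH|/and4P [_ _ Hw' _]]; first by rewrite (minn_idPr Hw).
by rewrite ltnNge Hw in Hw'.
Qed.

Lemma Dsig_join u v w : (sigma w < sigma v)%N -> (sigma v < sigma u)%N ->
  Dsig sigma E u w -> Dsig sigma E v w -> Dsig sigma E u v.
Proof.
move=> Hwv Hvu; rewrite /Dsig => /fill_iter_min Hu /fill_iter_min Hv.
have Hm : (sigma w < p - 2)%N.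
  by have := ltn_ord (sigma u); move: Hwv Hvu; lia.
rewrite (minn_idPr (ltnW Hm)) in Hu Hv.
apply: (fill_iter_mono (n := (sigma w).+1)) => //=.
apply/orP; right; apply/and4P; split.
- by apply/eqP => E0; move: Hvu; rewrite E0 ltnn.
- exact: ltn_trans Hwv Hvu.
- exact: Hwv.
- by apply/existsP; exists w; rewrite eqxx Hu Hv.
Qed.

Definition Fsig (a b : 'I_p) : bool :=
  [exists u, exists v, [&& sigma u == a, sigma v == b & Dsig sigma E u v]].

Lemma Fsig_join (a b m : 'I_p) : (m < b)%N -> (b < a)%N ->
  Fsig a m -> Fsig b m -> Fsig a b.
Proof.
move=> Hmb Hba /existsP [u /existsP [w /and3P [/eqP Hu /eqP Hw H1]]].
move=> /existsP [v /existsP [w' /and3P [/eqP Hv /eqP Hw' H2]]].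
have ew : w' = w by apply: sigma_inj; rewrite Hw Hw'.
subst w'; apply/existsP; exists u; apply/existsP; exists v; rewrite Hu Hv !eqxx /=.
by apply: (Dsig_join (w := w)); rewrite ?Hu ?Hv ?Hw.
Qed.

Lemma Esig_Fsig a b : Esig sigma E a b -> Fsig a b.
Proof.
move=> /existsP [u /existsP [v /and3P [H1 H2 H3]]].
apply/existsP; exists u; apply/existsP; exists v; rewrite H1 H2 /=.
exact: (fill_iter_mono (n := 0)).
Qed.

Lemma GB_no_filled_triangle (a b m : 'I_p) : GB_ordering sigma E ->
  ~~ Esig sigma E a b -> ~~ Esig sigma E a m -> ~~ Esig sigma E b m ->
  Fsig a b -> Fsig a m -> Fsig b m -> False.
Proof.
move=> GB Nab Nam Nbm.
move=> /existsP [u /existsP [v /and3P [/eqP Hu /eqP Hv H1]]].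
move=> /existsP [u' /existsP [w /and3P [/eqP Hu' /eqP Hw H2]]].
move=> /existsP [v' /existsP [w' /and3P [/eqP Hv' /eqP Hw' H3]]].
have eu : u' = u by apply: sigma_inj; rewrite Hu Hu'.
have ev : v' = v by apply: sigma_inj; rewrite Hv Hv'.
have ew : w' = w by apply: sigma_inj; rewrite Hw Hw'.
subst u' v' w'.
have NE a' b' u' v' : sigma u' = a' -> sigma v' = b' ->
    ~~ Esig sigma E a' b' -> ~~ E u' v'.
  move=> Ha Hb; apply: contra => Huv.
  by apply/existsP; exists u'; apply/existsP; exists v'; rewrite Ha Hb !eqxx.
apply: GB; exists u, v, w; rewrite H1 H2 H3 !andbT.
by rewrite (NE _ _ _ _ Hu Hv Nab) (NE _ _ _ _ Hv Hw Nbm) (NE _ _ _ _ Hu Hw Nam).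
Qed.

Lemma Lfull_nonfill (R : realType) (x : 'I_p -> 'I_p -> R) D (a b : 'I_p) :
  (b < a)%N -> ~~ Esig sigma E a b -> ~~ Fsig a b ->
  Lfull (Esig sigma E) x D a b = 0.
Proof.
set L := Lfull (Esig sigma E) x D.
suff H : forall n (a b : 'I_p), (b < n)%N -> (b < a)%N ->
    ~~ Esig sigma E a b -> ~~ Fsig a b -> L a b = 0.
  by apply: H (ltnSn _).
elim=> [//|n IH] {}a {}b Hbn Hba NE NF.
rewrite /L Lfull_rec -/L.
have -> : (a == b) = false by apply/negbTE; rewrite neq_ltn Hba orbT.
rewrite Hba (negbTE NE).
suff -> : \sum_(k < p | (k < b)%N) L a k * D k * L b k = 0 by rewrite oppr0 mul0r.
apply: big1 => m Hm.
have nz (c : 'I_p) : (m < c)%N -> L c m != 0 -> Fsig c m.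
  move=> Hmc; apply: contraR => Nc; apply/eqP; apply: IH => //.
    by move: Hm Hbn; lia.
  by apply: contra Nc; apply: Esig_Fsig.
have [->|Ha] := eqVneq (L a m) 0; first by rewrite !mul0r.
have [->|Hb] := eqVneq (L b m) 0; first by rewrite !mulr0.
have := Fsig_join Hm Hba (nz a (ltn_trans Hm Hba) Ha) (nz b Hm Hb).
by rewrite (negbTE NF).
Qed.

End Triangulation.

Lemma detF_triangular (R : realType) (T : finType) (M : T -> T -> R)
    (r : T -> nat) :
  injective r -> (forall a b, (r a < r b)%N -> M a b = 0) ->
  detF M = \prod_a M a a.
Proof.
move=> r_inj Mupper; rewrite /detF (bigD1 1%g) //= odd_perm1 expr0 mul1r.
under eq_bigr do rewrite perm1.
rewrite [X in _ + X]big1 ?addr0 // => s Hs.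
suff [a Ha] : exists a, (r a < r (s a))%N.
  by rewrite (bigD1 a) //= Mupper ?mul0r ?mulr0.
(* A permutation never raising the rank fixes it pointwise, as it preserves the rank sum. *)
case: (boolP [exists a, (r a < r (s a))%N]) => [/existsP //|/existsPn Hn].
exfalso; have Hle a : (r (s a) <= r a)%N by rewrite leqNgt Hn.
move/eqP: Hs; apply; apply/permP => a; rewrite perm1.
apply: r_inj; apply/eqP; rewrite eqn_leq Hle /=.
have Hsum : (\sum_b r (s b) = \sum_b r b)%N.
  by rewrite [RHS](reindex_inj (@perm_inj _ s)).
rewrite leqNgt; apply/negP => Hlt.
move: Hsum; rewrite (bigD1 a) //= [in RHS](bigD1 a) //=.
have : (\sum_(b | b != a) r (s b) <= \sum_(b | b != a) r b)%N by apply: leq_sum.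
lia.
Qed.

Lemma derive1_affine (R : realType) (c d x : R) :
  derive1 (fun s : R => s * c + d) x = c.
Proof.
rewrite derive1E.
have H := is_deriveD (is_deriveM (is_derive_id x (1 : R))
  (is_derive_cst c x (1 : R))) (is_derive_cst d x (1 : R)).
transitivity ('D_1 ((id : R -> R) * cst c + cst d : R -> R) x); first by [].
by rewrite (@derive_val _ _ _ _ _ _ _ H) scaler0 add0r addr0 /GRing.scale /= mulr1.
Qed.

Section Jacobian.
Variables (R : realType) (V : finType) (p : nat) (sigma : V -> 'I_p) (E : rel V).
Local Notation F := (Esig sigma E).
Local Notation AC := {c : Cidx p | active sigma E c}.
Implicit Types (x : 'I_p -> 'I_p -> R) (dt : 'I_p -> R).

Lemma Omega_ofE x dt (a b : 'I_p) : Omega_of sigma E x dt a b =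
  \sum_m Lfull F x (Dof dt) a m * Dof dt m * Lfull F x (Dof dt) b m.
Proof. by rewrite /Omega_of mul_mx_diag !mxE; apply: eq_bigr => m _; rewrite !mxE. Qed.

Lemma Omega_of_lower x dt (a b : 'I_p) : Omega_of sigma E x dt a b =
  \sum_(m < p | (m <= b)%N) Lfull F x (Dof dt) a m * Dof dt m * Lfull F x (Dof dt) b m.
Proof.
rewrite Omega_ofE (bigID (fun m : 'I_p => (m <= b)%N)) /= [X in _ + X]big1 ?addr0 //.
by move=> m; rewrite -ltnNge => /Lfull_upper ->; rewrite mulr0.
Qed.

Definition Dprev dt (k : 'I_p) := \prod_(m < p | (m < k)%N) dt m.

Lemma Dof_updD_lt dt (k : 'I_p) s (m : 'I_p) : (m < k)%N ->
  Dof (updD dt k s) m = Dof dt m.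
Proof.
move=> Hm; apply: eq_bigr => m' Hm'; rewrite /updD.
by case: eqP => // E0; move: Hm Hm'; rewrite -E0; lia.
Qed.

Lemma Dof_updD_eq dt (k : 'I_p) s : Dof (updD dt k s) k = s * Dprev dt k.
Proof.
rewrite /Dof (bigD1 k) //= /updD eqxx; congr (_ * _).
rewrite /Dprev; apply: eq_big => m; first by rewrite ltn_neqAle andbC -val_eqE.
by move=> /andP [_ /negbTE ->].
Qed.

Lemma Lfull_updD x dt (k : 'I_p) s (a b : 'I_p) : (b < k)%N ->
  Lfull F x (Dof (updD dt k s)) a b = Lfull F x (Dof dt) a b.
Proof. by move=> Hb; apply: (@Lfull_local _ _ _ _ _ _ _ k) => // m /Dof_updD_lt. Qed.

Lemma Omega_updD x dt (k : 'I_p) s (a b : 'I_p) : (b < k)%N ->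
  Omega_of sigma E x (updD dt k s) a b = Omega_of sigma E x dt a b.
Proof.
move=> Hb; rewrite !Omega_of_lower; apply: eq_bigr => m Hm.
have Hmk : (m < k)%N by apply: leq_ltn_trans Hm Hb.
by rewrite !Lfull_updD // Dof_updD_lt.
Qed.

Lemma Lfull_updL x D (i j : 'I_p) s (a b : 'I_p) : (b <= j)%N ->
  ~~ ((a == i) && (b == j)) ->
  Lfull F (updL x i j s) D a b = Lfull F x D a b.
Proof.
move=> Hb Hab; apply: Lfull_local_col => //; last by rewrite /updL (negbTE Hab).
move=> u v Hv; rewrite /updL; case: (v =P j) => [E0|]; last by rewrite andbF.
by move: Hv Hb; rewrite E0; lia.
Qed.

Lemma Omega_updL x dt (i j : 'I_p) s (a b : 'I_p) : (b <= j)%N ->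
  ~~ ((a == i) && (b == j)) -> i != j ->
  Omega_of sigma E (updL x i j s) dt a b = Omega_of sigma E x dt a b.
Proof.
move=> Hb Hab Hij; rewrite !Omega_of_lower; apply: eq_bigr => m Hm.
have Hmj : (m <= j)%N := leq_trans Hm Hb.
have H1 : ~~ ((a == i) && (m == j)).
  apply/negP => /andP [/eqP Eai /eqP Emj]; move: Hab; rewrite Eai eqxx /=.
  by move: Hm Hb; rewrite Emj -val_eqE /=; lia.
have H2 : ~~ ((b == i) && (m == j)).
  apply/negP => /andP [/eqP Ebi /eqP Emj]; move: Hm Hb Hij.
  by rewrite Ebi Emj -val_eqE /=; lia.
by rewrite (Lfull_updL _ _ _ Hmj H1) (Lfull_updL _ _ _ Hmj H2).
Qed.

(* Coordinates are ordered by column, Dtilde_k before the entries L_ik, i > k;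
   Omega_ab only depends on coordinates that do not come later than (a,b). *)
Definition coord_rank (c : Cidx p) : nat :=
  match c with inl ij => (ij.2 * p.+1 + ij.1)%N | inr k => (k * p.+1)%N end.

Lemma mulnD_small_inj (q a b a' b' : nat) : (b < q)%N -> (b' < q)%N ->
  (a * q + b = a' * q + b')%N -> a = a' /\ b = b'.
Proof.
move=> Hb Hb' H.
have Eb : b = b' by have := congr1 (modn^~ q) H; rewrite /= !modnMDl !modn_small.
subst b'; split => //; move/addIn: H => /eqP.
by rewrite eqn_pmul2r ?(leq_ltn_trans (leq0n _) Hb) // => /eqP.
Qed.

Lemma coord_rank_inj : injective (fun a : AC => coord_rank (val a)).
Proof.
have Hq (i : 'I_p) : (i < p.+1)%N by exact: ltnW (ltn_ord i).
move=> [[[i j]|k] Ha] [[[i' j']|k'] Hb] /= H; apply: val_inj => /=.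
- have [Ej Ei] := mulnD_small_inj (Hq i) (Hq i') H.
  by congr inl; congr pair; apply: val_inj.
- move: Ha => /andP [Hji _] /=; rewrite -[(k' * _)%N]addn0 in H.
  by have [_ E0] := mulnD_small_inj (Hq i) (ltn0Sn _) H; move: Hji; rewrite E0.
- move: Hb => /andP [Hji _] /=; rewrite -[(k * _)%N]addn0 in H.
  by have [_ E0] := mulnD_small_inj (ltn0Sn _) (Hq i') H; move: Hji; rewrite -E0.
- rewrite -[(k * _)%N]addn0 -[(k' * _)%N]addn0 in H.
  by have [Ek _] := mulnD_small_inj (ltn0Sn p) (ltn0Sn p) H; congr inr; apply: val_inj.
Qed.

Lemma jac_upper x dt (a b : AC) : (coord_rank (val a) < coord_rank (val b))%N ->
  @jac R V p sigma E (x, dt) a b = 0.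
Proof.
rewrite /jac => H.
rewrite (_ : (fun t => _) = cst (out_val (Omega_of sigma E x dt) (val a)));
  first exact: derive1_cst.
apply: funext => s.
move: a b H => [[[a1 a2]|k] Ha] [[[i j]|k'] Hb] /= H.
- move: Hb => /andP [Hji _].
  have Ha2 : (a2 <= j)%N by have := ltn_ord a1; have := ltn_ord i; move: H; nia.
  apply: Omega_updL => //; last by rewrite neq_ltn Hji orbT.
  by apply/negP => /andP [/eqP E1 /eqP E2]; move: H; rewrite E1 E2 ltnn.
- by apply: Omega_updD; have := ltn_ord a1; move: H; nia.
- move: Hb => /andP [Hji _].
  have Hk : (k <= j)%N by have := ltn_ord i; move: H; nia.
  apply: Omega_updL => //; last by rewrite neq_ltn Hji orbT.
  by apply/negP => /andP [/eqP E1 /eqP E2]; move: Hji; rewrite -E1 E2 ltnn.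
- by apply: Omega_updD; move: H; nia.
Qed.

Definition jdiag dt (c : Cidx p) : R :=
  match c with inl ij => Dof dt ij.2 | inr k => Dprev dt k end.

Lemma jac_diag x dt (a : AC) : @jac R V p sigma E (x, dt) a a = jdiag dt (val a).
Proof.
rewrite /jac; move: a => [[[i j]|k] Ha] /=.
- move: Ha => /andP [Hji Fij] /=.
  set d := \sum_(m < p | (m < j)%N)
    Lfull F x (Dof dt) i m * Dof dt m * Lfull F x (Dof dt) j m.
  rewrite -(derive1_affine (Dof dt j) d (x i j)); congr derive1; apply: funext => s.
  rewrite Omega_of_lower (bigD1 j) //= Lfull_diag mulr1.
  have -> : Lfull F (updL x i j s) (Dof dt) i j = s.
    rewrite Lfull_rec Hji Fij /updL !eqxx.
    by have -> : (i == j) = false by apply/negbTE; rewrite neq_ltn Hji orbT.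
  congr (_ + _); rewrite /d; apply: eq_big => m.
    by rewrite ltn_neqAle andbC -val_eqE.
  move=> /andP [Hm Hmj].
  have H2 : ~~ ((j == i) && (m == j)).
    by apply/negP => /andP [/eqP E1 _]; move: Hji; rewrite E1 ltnn.
  by rewrite !Lfull_updL // eqxx.
- set d := \sum_(m < p | (m < k)%N)
    Lfull F x (Dof dt) k m * Dof dt m * Lfull F x (Dof dt) k m.
  rewrite -(derive1_affine (Dprev dt k) d (dt k)); congr derive1; apply: funext => s.
  rewrite Omega_of_lower (bigD1 k) //= Lfull_diag mulr1 mul1r Dof_updD_eq.
  congr (_ + _); rewrite /d; apply: eq_big => m.
    by rewrite ltn_neqAle andbC -val_eqE.
  move=> /andP [Hm Hmk].
  have Hmk' : (m < k)%N by rewrite ltn_neqAle Hm andbT.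
  by rewrite !Lfull_updD // Dof_updD_lt.
Qed.

Lemma detF_jac x dt : detF (@jac R V p sigma E (x, dt)) = \prod_(a : AC) jdiag dt (val a).
Proof.
rewrite (detF_triangular coord_rank_inj); last exact: jac_upper.
by apply: eq_bigr => a _; rewrite jac_diag.
Qed.

End Jacobian.

Section QuadraticForm.
Variables (R : realType) (p : nat).
Implicit Types (U : 'M[R]_p) (v w : 'I_p -> R).

Definition qf U v : R := \sum_a \sum_b v a * U b a * v b.
Definition bil U v w : R := \sum_a \sum_b (v a * U b a * w b + w a * U b a * v b).

Lemma qf_affine U v w t :
  qf U (fun a => v a + w a * t) = qf U v + t * bil U v w + t ^+ 2 * qf U w.
Proof.
rewrite /qf /bil !mulr_sumr -!big_split /=; apply: eq_bigr => a _.
by rewrite !mulr_sumr -!big_split /=; apply: eq_bigr => b _; ring.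
Qed.

Lemma qf_gt0 U v : posdef U -> (exists a, v a != 0) -> 0 < qf U v.
Proof.
move=> [Usym Upos] [a0 Ha0].
have Hw : (\col_a v a : 'cV[R]_p) != 0.
  by apply: contraNneq Ha0 => /matrixP /(_ a0 0); rewrite !mxE => ->.
have -> : qf U v = ((\col_a v a)^T *m U *m (\col_a v a)) 0 0; last exact: Upos.
rewrite mxE /qf exchange_big /=; apply: eq_bigr => b _.
rewrite [X in _ = X * _]mxE mulr_suml; apply: eq_bigr => a _; rewrite !mxE.
by move/matrixP: Usym => /(_ a b); rewrite mxE => ->.
Qed.

Lemma qf_ge0 U v : posdef U -> 0 <= qf U v.
Proof.
move=> HU; case: (boolP [exists a, v a != 0]) => [/existsP H|/existsPn H].
  exact/ltW/qf_gt0.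
rewrite /qf big1 // => a _; rewrite big1 // => b _.
by have := H a; rewrite negbK => /eqP ->; rewrite !mul0r.
Qed.

Lemma trace_Omega_of (V : finType) (sigma : V -> 'I_p) (E : rel V) x dt U :
  \tr (Omega_of sigma E x dt *m U) =
  \sum_m Dof dt m * qf U (fun a => Lfull (Esig sigma E) x (Dof dt) a m).
Proof.
rewrite /mxtrace.
under eq_bigr => a _ do rewrite mxE.
under eq_bigr => a _ do under eq_bigr => b _ do rewrite Omega_ofE mulr_suml.
under eq_bigr => a _ do rewrite exchange_big /=.
rewrite exchange_big /=; apply: eq_bigr => m _.
rewrite /qf mulr_sumr; apply: eq_bigr => a _.
by rewrite mulr_sumr; apply: eq_bigr => b _; ring.
Qed.

End QuadraticForm.

Lemma sum_mul_affine (R : comRingType) (I : finType) (P : pred I)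
    (a1 b1 a2 b2 d : I -> R) t :
  (forall m, P m -> b1 m * b2 m = 0) ->
  \sum_(m | P m) (a1 m + b1 m * t) * d m * (a2 m + b2 m * t) =
  \sum_(m | P m) a1 m * d m * a2 m
  + (\sum_(m | P m) (a1 m * d m * b2 m + b1 m * d m * a2 m)) * t.
Proof.
move=> Hz; rewrite mulr_suml -big_split /=; apply: eq_bigr => m Pm.
transitivity (a1 m * d m * a2 m + (a1 m * d m * b2 m + b1 m * d m * a2 m) * t
  + b1 m * b2 m * d m * t ^+ 2); first by ring.
by rewrite Hz // !mul0r addr0.
Qed.

Lemma sum_mul_inv_affine (R : fieldType) (I : finType) (P c : pred I)
    (a1 b1 a2 b2 d : I -> R) t : t != 0 ->
  (forall m, P m -> b1 m * b2 m = 0) ->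
  (forall m, P m -> ~~ c m -> b1 m = 0 /\ b2 m = 0) ->
  \sum_(m | P m) (a1 m + b1 m * t^-1) * ((if c m then t else 1) * d m)
                 * (a2 m + b2 m * t^-1) =
  (\sum_(m | P m) (if c m then d m * a1 m * a2 m else 0)) * t
  + \sum_(m | P m) (if c m then d m * (a1 m * b2 m + b1 m * a2 m)
                    else a1 m * d m * a2 m).
Proof.
move=> Ht Hz Hc; rewrite mulr_suml -big_split /=; apply: eq_bigr => m Pm.
case: ifP => cm; last by have [-> ->] := Hc m Pm (negbT cm); ring.
transitivity (d m * a1 m * a2 m * t + d m * (a1 m * b2 m + b1 m * a2 m) * (t * t^-1)
  + d m * (b1 m * b2 m) * (t * t^-1 ^+ 2)); first by move: t^-1 => s; ring.
by rewrite Hz // mulfV // !mulr0 mul0r mulr1 addr0.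
Qed.

Section AffineInEntry.
Variables (R : realType) (V : finType) (p : nat) (sigma : V -> 'I_p) (E : rel V).
Hypotheses (sigma_inj : injective sigma) (GB : GB_ordering sigma E).
Local Notation F := (Esig sigma E).
Local Notation Fl := (Fsig sigma E).
Variables (x : 'I_p -> 'I_p -> R) (D : 'I_p -> R) (i0 j0 : 'I_p).
Implicit Types a b : 'I_p.

Definition L_updL (t : R) := Lfull F (updL x i0 j0 t) D.
Definition cst_updL a b := L_updL 0 a b.
Definition lin_updL a b := L_updL 1 a b - L_updL 0 a b.

Definition lin_updL_support a b :=
  ((a == i0) && (b == j0)) || [&& ~~ F a b, Fl a b & (j0 < b)%N].

Definition affine_updL a b :=
  (forall t, L_updL t a b = cst_updL a b + lin_updL a b * t) /\
  (lin_updL a b != 0 -> lin_updL_support a b).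

Lemma affine_updL_witness a b A B : (forall t, L_updL t a b = A + B * t) ->
  (B != 0 -> lin_updL_support a b) -> affine_updL a b.
Proof.
move=> HAB HB; have EB : lin_updL a b = B by rewrite /lin_updL !HAB; ring.
rewrite /affine_updL /cst_updL EB; split => // t.
by rewrite !HAB; ring.
Qed.

Lemma affine_updL_fill a b : (b < a)%N -> ~~ F a b -> Fl a b ->
  (forall m : 'I_p, (m < b)%N -> affine_updL a m /\ affine_updL b m) ->
  affine_updL a b.
Proof.
move=> Hba Fab Flab IH.
have Hz (m : 'I_p) : (m < b)%N -> lin_updL a m * lin_updL b m = 0.
  move=> Hm; have [[_ Sa] [_ Sb]] := IH m Hm.
  apply/eqP; rewrite mulf_eq0; apply/negPn/negP.
  rewrite negb_or => /andP [/Sa Ca /Sb Cb]; move: Ca Cb; rewrite /lin_updL_support.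
  case/orP => [/andP [/eqP Ea /eqP Em]|/and3P [Fam Flam Hjm]];
  case/orP => [/andP [/eqP Eb /eqP Em']|/and3P [Fbm Flbm Hjm']].
  - by move: Hba; rewrite Ea Eb ltnn.
  - by move: Hjm'; rewrite Em ltnn.
  - by move: Hjm; rewrite Em' ltnn.
  - exact: (GB_no_filled_triangle sigma_inj GB Fab Fam Fbm Flab Flam Flbm).
set S1 := \sum_(m < p | (m < b)%N) cst_updL a m * D m * cst_updL b m.
set Bm := fun m : 'I_p =>
  cst_updL a m * D m * lin_updL b m + lin_updL a m * D m * cst_updL b m.
set S2 := \sum_(m < p | (m < b)%N) Bm m.
apply: (@affine_updL_witness _ _ (- S1 / D b) (- S2 / D b)).
  move=> t; rewrite /L_updL Lfull_rec.
  have -> : (a == b) = false by apply/negbTE; rewrite neq_ltn Hba orbT.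
  rewrite Hba (negbTE Fab) -/(L_updL t).
  rewrite (eq_bigr (fun m => (cst_updL a m + lin_updL a m * t) * D m
                             * (cst_updL b m + lin_updL b m * t))); last first.
    by move=> m Hm; have [[-> _] [-> _]] := IH m Hm.
  by rewrite sum_mul_affine // -/S1 -/S2; ring.
move=> HB.
have [m Hm HBm] : exists2 m : 'I_p, (m < b)%N & Bm m != 0.
  apply/exists_inP; apply: contraNT HB => /exists_inPn Hn.
  by rewrite /S2 big1 ?oppr0 ?mul0r // => m /Hn /negPn /eqP.
have [[_ Sa] [_ Sb]] := IH m Hm.
have Hjm : (j0 <= m)%N.
  have [Ha0|/Sa] := eqVneq (lin_updL a m) 0; last first.
    by case/orP => [/andP [_ /eqP ->]|/and3P [_ _ /ltnW]].
  have [Hb0|/Sb] := eqVneq (lin_updL b m) 0.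
    by move: HBm; rewrite /Bm Ha0 Hb0 !mulr0 !mul0r addr0 eqxx.
  by case/orP => [/andP [_ /eqP ->]|/and3P [_ _ /ltnW]].
by rewrite /lin_updL_support Fab Flab (leq_ltn_trans Hjm Hm) orbT.
Qed.

Lemma affine_updL_all a b : affine_updL a b.
Proof.
suff H : forall n a b, (b < n)%N -> affine_updL a b by exact: H (ltnSn b).
elim=> [//|n IH] {}a {}b Hbn.
case: (eqVneq a b) => [->|Hab].
  apply: (@affine_updL_witness _ _ 1 0) => [t|]; last by rewrite eqxx.
  by rewrite /L_updL Lfull_diag mul0r addr0.
case: (ltnP b a) => Hba; last first.
  have Hab' : (a < b)%N by rewrite ltn_neqAle Hba andbT.
  apply: (@affine_updL_witness _ _ 0 0) => [t|]; last by rewrite eqxx.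
  by rewrite /L_updL Lfull_upper ?mul0r ?addr0.
have Hrec t := Lfull_rec F (updL x i0 j0 t) D a b.
rewrite (negbTE Hab) Hba in Hrec.
case: (boolP (F a b)) => Fab.
  rewrite Fab in Hrec.
  case: (boolP ((a == i0) && (b == j0))) => Hc.
    apply: (@affine_updL_witness _ _ 0 1) => [t|_]; last by rewrite /lin_updL_support Hc.
    by rewrite /L_updL Hrec /updL Hc add0r mul1r.
  apply: (@affine_updL_witness _ _ (x a b) 0) => [t|]; last by rewrite eqxx.
  by rewrite /L_updL Hrec /updL (negbTE Hc) mul0r addr0.
case: (boolP (Fl a b)) => Flab; last first.
  apply: (@affine_updL_witness _ _ 0 0) => [t|]; rewrite ?eqxx // mul0r addr0.
  exact: Lfull_nonfill.
by apply: affine_updL_fill => // m Hm; split; apply: IH; exact: leq_trans Hm Hbn.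
Qed.

End AffineInEntry.

Section SplitDof.
Variables (R : realType) (p : nat) (dt : 'I_p -> R) (k : 'I_p).

Definition Dof_skip (m : 'I_p) := \prod_(m' < p | (m' <= m)%N && (m' != k)) dt m'.
Definition Dprev_skip (m : 'I_p) := \prod_(m' < p | (m' < m)%N && (m' != k)) dt m'.

Lemma prod_updD (P : pred 'I_p) t :
  \prod_(m < p | P m) updD dt k t m =
  (if P k then t else 1) * \prod_(m < p | P m && (m != k)) dt m.
Proof.
case: ifP => Pk.
  rewrite (bigD1 k) //= /updD eqxx; congr (_ * _).
  by apply: eq_bigr => m /andP [_ /negbTE ->].
rewrite mul1r; apply: eq_big => m.
  by case: (eqVneq m k) => [->|]; rewrite ?Pk ?andbT.
by rewrite /updD; case: eqP => // ->; rewrite Pk.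
Qed.

Lemma Dof_updD t (m : 'I_p) :
  Dof (updD dt k t) m = (if (k <= m)%N then t else 1) * Dof_skip m.
Proof. exact: prod_updD. Qed.

Lemma Dprev_updD t (m : 'I_p) :
  Dprev (updD dt k t) m = (if (k < m)%N then t else 1) * Dprev_skip m.
Proof. exact: prod_updD. Qed.

Hypothesis dt_gt0 : forall k', k' != k -> 0 < dt k'.

Lemma Dof_skip_gt0 m : 0 < Dof_skip m.
Proof. by apply: prodr_gt0 => m' /andP [_ /dt_gt0]. Qed.

Lemma Dprev_skip_gt0 m : 0 < Dprev_skip m.
Proof. by apply: prodr_gt0 => m' /andP [_ /dt_gt0]. Qed.

End SplitDof.

Section AffineInInverse.
Variables (R : realType) (V : finType) (p : nat) (sigma : V -> 'I_p) (E : rel V).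
Hypotheses (sigma_inj : injective sigma) (GB : GB_ordering sigma E).
Local Notation F := (Esig sigma E).
Local Notation Fl := (Fsig sigma E).
Variables (x : 'I_p -> 'I_p -> R) (dt : 'I_p -> R) (k : 'I_p).
Hypothesis dt_gt0 : forall k', k' != k -> 0 < dt k'.
Implicit Types a b : 'I_p.

Definition L_updD (t : R) := Lfull F x (Dof (updD dt k t)).
(* The coefficients of an affine function of 1/t, read off at t = 1 and t = 1/2. *)
Definition cst_updD a b := 2 * L_updD 1 a b - L_updD 2^-1 a b.
Definition inv_updD a b := L_updD 2^-1 a b - L_updD 1 a b.

Definition inv_updD_support a b := [&& ~~ F a b, Fl a b & (k <= b)%N].

Definition affine_updD a b :=
  (forall t : R, t != 0 -> L_updD t a b = cst_updD a b + inv_updD a b * t^-1) /\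
  (inv_updD a b != 0 -> inv_updD_support a b).

Lemma affine_updD_witness a b A B :
  (forall t : R, t != 0 -> L_updD t a b = A + B * t^-1) ->
  (B != 0 -> inv_updD_support a b) -> affine_updD a b.
Proof.
move=> HAB HB.
have h2 : (2^-1 : R) != 0 by rewrite invr_eq0.
have E1 : L_updD 1 a b = A + B by rewrite HAB ?oner_neq0 // invr1 mulr1.
have E2 : L_updD 2^-1 a b = A + B * 2 by rewrite HAB // invrK.
have EB : inv_updD a b = B by rewrite /inv_updD E1 E2; ring.
rewrite /affine_updD /cst_updD EB E1 E2; split => // t Ht.
by rewrite HAB //; ring.
Qed.

Lemma affine_updD_fill a b : (b < a)%N -> ~~ F a b -> Fl a b ->
  (forall m : 'I_p, (m < b)%N -> affine_updD a m /\ affine_updD b m) ->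
  affine_updD a b.
Proof.
move=> Hba Fab Flab IH.
have Hz (m : 'I_p) : (m < b)%N -> inv_updD a m * inv_updD b m = 0.
  move=> Hm; have [[_ Sa] [_ Sb]] := IH m Hm.
  apply/eqP; rewrite mulf_eq0; apply/negPn/negP.
  rewrite negb_or => /andP [/Sa /and3P [Fam Flam _] /Sb /and3P [Fbm Flbm _]].
  exact: (GB_no_filled_triangle sigma_inj GB Fab Fam Fbm Flab Flam Flbm).
have Hc (m : 'I_p) : (m < b)%N -> ~~ (k <= m)%N ->
    inv_updD a m = 0 /\ inv_updD b m = 0.
  move=> Hm Hkm; have [[_ Sa] [_ Sb]] := IH m Hm.
  by split; apply/eqP; apply: contraNT Hkm; [move/Sa | move/Sb]; case/and3P.
set T1 := fun m : 'I_p => if (k <= m)%N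
  then Dof_skip dt k m * cst_updD a m * cst_updD b m else 0.
set T0 := fun m : 'I_p => if (k <= m)%N
  then Dof_skip dt k m * (cst_updD a m * inv_updD b m + inv_updD a m * cst_updD b m)
  else cst_updD a m * Dof_skip dt k m * cst_updD b m.
set S1 := \sum_(m < p | (m < b)%N) T1 m.
set S0 := \sum_(m < p | (m < b)%N) T0 m.
have Hrec t : t != 0 -> L_updD t a b =
    - (S1 * t + S0) / ((if (k <= b)%N then t else 1) * Dof_skip dt k b).
  move=> Ht; rewrite /L_updD Lfull_rec -/(L_updD t) -Dof_updD.
  have -> : (a == b) = false by apply/negbTE; rewrite neq_ltn Hba orbT.
  rewrite Hba (negbTE Fab) /S1 /S0 -sum_mul_inv_affine //; congr (- _ / _).
  by apply: eq_bigr => m Hm; have [[-> // _] [-> // _]] := IH m Hm; rewrite Dof_updD.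
have Hskip : Dof_skip dt k b != 0 := lt0r_neq0 (Dof_skip_gt0 dt_gt0 b).
case: (leqP k b) => Hkb.
  apply: (@affine_updD_witness _ _ (- S1 / Dof_skip dt k b) (- S0 / Dof_skip dt k b)).
    by move=> t Ht; rewrite Hrec // Hkb; field; rewrite Ht Hskip.
  by rewrite /inv_updD_support Fab Flab Hkb.
have S1_eq0 : S1 = 0.
  by rewrite /S1 big1 // => m Hm; rewrite /T1 leqNgt (ltn_trans Hm Hkb).
apply: (@affine_updD_witness _ _ (- S0 / Dof_skip dt k b) 0); last by rewrite eqxx.
by move=> t Ht; rewrite Hrec // S1_eq0 leqNgt Hkb mul0r add0r mul1r mul0r addr0.
Qed.

Lemma affine_updD_all a b : affine_updD a b.
Proof.
suff H : forall n a b, (b < n)%N -> affine_updD a b by exact: H (ltnSn b).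
elim=> [//|n IH] {}a {}b Hbn.
case: (eqVneq a b) => [->|Hab].
  apply: (@affine_updD_witness _ _ 1 0) => [t _|]; last by rewrite eqxx.
  by rewrite /L_updD Lfull_diag mul0r addr0.
case: (ltnP b a) => Hba; last first.
  have Hab' : (a < b)%N by rewrite ltn_neqAle Hba andbT.
  apply: (@affine_updD_witness _ _ 0 0) => [t _|]; last by rewrite eqxx.
  by rewrite /L_updD Lfull_upper ?mul0r ?addr0.
case: (boolP (F a b)) => Fab.
  apply: (@affine_updD_witness _ _ (x a b) 0) => [t _|]; last by rewrite eqxx.
  by rewrite /L_updD Lfull_rec (negbTE Hab) Hba Fab mul0r addr0.
case: (boolP (Fl a b)) => Flab; last first.
  apply: (@affine_updD_witness _ _ 0 0) => [t _|]; rewrite ?eqxx // mul0r addr0.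
  exact: Lfull_nonfill.
by apply: affine_updD_fill => // m Hm; split; apply: IH; exact: leq_trans Hm Hbn.
Qed.

End AffineInInverse.

Lemma expR_quadratic (R : realType) (K0 K1 K2 t : R) : K2 != 0 ->
  expR (- (K0 + K1 * t + K2 * t ^+ 2) / 2) =
  expR (- K0 / 2 + K1 ^+ 2 / (8 * K2))
  * expR (- (t - - K1 / (2 * K2)) ^+ 2 / (2 * K2^-1)).
Proof. by move=> HK2; rewrite -expRD; congr expR; field. Qed.

Lemma powR_sum (R : realType) (I : Type) (r : seq I) (P : pred I) (e : I -> R) (t : R) :
  0 < t -> t `^ (\sum_(i <- r | P i) e i) = \prod_(i <- r | P i) t `^ e i.
Proof.
move=> Ht; apply: (big_rec2 (fun a b => t `^ a = b)) => [|i a b _ <-].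
  exact: powRr0.
by rewrite powRD //; apply/implyP => _; rewrite gt_eqF.
Qed.

Lemma sum_ge0_gt0 (R : realType) (I : finType) (G : I -> R) (i0 : I) :
  (forall i, 0 <= G i) -> 0 < G i0 -> 0 < \sum_i G i.
Proof.
move=> G_ge0 Hi0; rewrite (bigD1 i0) //=; apply: ltr_pwDl => //.
exact: sumr_ge0.
Qed.

Section Conditionals.
Variables (R : realType) (V : finType) (p : nat) (sigma : V -> 'I_p) (E : rel V).
Hypotheses (sigma_inj : injective sigma) (GB : GB_ordering sigma E).
Variables (U : 'M[R]_p) (delta : 'I_p -> R).
Hypotheses (U_posdef : posdef U) (delta_gt0 : forall i, 0 < delta i).
Local Notation AC := {c : Cidx p | active sigma E c}.
Implicit Types (x : 'I_p -> 'I_p -> R) (dt : 'I_p -> R).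

Lemma gw_densityE x dt : gw_density sigma E U delta (x, dt) =
  (\prod_(m < p) Dof dt m `^ (delta m / 2))
  * expR (- \tr (Omega_of sigma E x dt *m U) / 2)
  * `|\prod_(a : AC) jdiag dt (val a)|.
Proof. by rewrite /gw_density detF_jac. Qed.

Lemma trace_updL_quadratic i j x dt : freeL sigma E i j -> (forall m, 0 < dt m) ->
  exists K0 K1 K2 : R, 0 < K2 /\ forall t,
    \tr (Omega_of sigma E (updL x i j t) dt *m U) = K0 + K1 * t + K2 * t ^+ 2.
Proof.
move=> /andP [Hji Fij] dt_gt0; set D := Dof dt.
pose al m a := cst_updL sigma E x D i j a m.
pose be m a := lin_updL sigma E x D i j a m.
exists (\sum_m D m * qf U (al m)), (\sum_m D m * bil U (al m) (be m)),
       (\sum_m D m * qf U (be m)); split.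
  have Hbe : be j i = 1.
    have Lij t : L_updL sigma E x D i j t i j = t.
      rewrite /L_updL Lfull_rec Hji Fij /updL !eqxx.
      by have -> : (i == j) = false by apply/negbTE; rewrite neq_ltn Hji orbT.
    by rewrite /be /lin_updL !Lij subr0.
  apply: (@sum_ge0_gt0 _ _ _ j) => [m|].
    by apply: mulr_ge0; [exact/ltW/prodr_gt0 | exact: qf_ge0].
  apply: mulr_gt0; first exact: prodr_gt0.
  by apply: qf_gt0 => //; exists i; rewrite Hbe oner_neq0.
move=> t; rewrite trace_Omega_of -/D mulr_suml mulr_suml -!big_split /=.
apply: eq_bigr => m _.
rewrite (_ : (fun a => _) = fun a => al m a + be m a * t); last first.
  by apply: funext => a; exact: (proj1 (affine_updL_all sigma_inj GB x D i j a m)).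
by rewrite qf_affine; ring.
Qed.

Lemma jdiag_prod_gt0 dt : (forall m, 0 < dt m) -> 0 < \prod_(a : AC) jdiag dt (val a).
Proof. by move=> dt_gt0; apply: prodr_gt0 => -[[ij|k'] _] _ /=; apply: prodr_gt0. Qed.

Lemma gw_density_updL_gaussian i j : freeL sigma E i j ->
  forall x dt, (forall m, 0 < dt m) ->
  exists mu s C : R, 0 < s /\ 0 < C /\ forall t,
    gw_density sigma E U delta (updL x i j t, dt) = C * expR (- (t - mu) ^+ 2 / (2 * s)).
Proof.
move=> Fij x dt dt_gt0.
have [K0 [K1 [K2 [HK2 Htr]]]] := trace_updL_quadratic x Fij dt_gt0.
set P := \prod_(m < p) Dof dt m `^ (delta m / 2).
set J := \prod_(a : AC) jdiag dt (val a).
have HP : 0 < P by apply: prodr_gt0 => m _; apply/powR_gt0/prodr_gt0.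
have HJ : 0 < J := jdiag_prod_gt0 dt_gt0.
exists (- K1 / (2 * K2)), K2^-1, (P * J * expR (- K0 / 2 + K1 ^+ 2 / (8 * K2))).
split; first by rewrite invr_gt0.
split; first by rewrite !mulr_gt0 // expR_gt0.
move=> t; rewrite gw_densityE -/P -/J Htr expR_quadratic ?gt_eqF //.
by rewrite gtr0_norm //; ring.
Qed.

Lemma trace_updD_inv_affine k x dt : (forall k', k' != k -> 0 < dt k') ->
  exists A B C0 : R, 0 < A /\ 0 <= B /\ forall t, 0 < t ->
    \tr (Omega_of sigma E x (updD dt k t) *m U) = A * t + C0 + B * t^-1.
Proof.
move=> dt_gt0; set cd := Dof_skip dt k.
pose al m a := cst_updD sigma E x dt k a m.
pose be m a := inv_updD sigma E x dt k a m.
have be_eq0 (m a : 'I_p) : (m < k)%N -> be m a = 0.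
  move=> Hmk; apply/eqP; apply: contraTT Hmk.
  have [_ Hsupp] := affine_updD_all sigma_inj GB x dt_gt0 a m.
  by move/Hsupp => /and3P [_ _]; rewrite -leqNgt.
have cd_gt0 m : 0 < cd m := Dof_skip_gt0 dt_gt0 m.
exists (\sum_(m < p) if (k <= m)%N then cd m * qf U (al m) else 0).
exists (\sum_(m < p) if (k <= m)%N then cd m * qf U (be m) else 0).
exists (\sum_(m < p) if (k <= m)%N then cd m * bil U (al m) (be m)
                     else cd m * qf U (al m)).
split.
  apply: (@sum_ge0_gt0 _ _ _ k) => [m|]; rewrite ?leqnn.
    by case: ifP => // _; apply: mulr_ge0; [exact: ltW | exact: qf_ge0].
  apply: mulr_gt0 => //; apply: qf_gt0 => //; exists k.
  rewrite /al /cst_updD /L_updD !Lfull_diag mulr1.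
  by rewrite (_ : 2 - 1 = 1 :> R) ?oner_neq0 //; ring.
split.
  apply: sumr_ge0 => m _; case: ifP => // _.
  by apply: mulr_ge0; [exact: ltW | exact: qf_ge0].
move=> t Ht; have Ht0 : t != 0 by rewrite gt_eqF.
rewrite trace_Omega_of !mulr_suml -!big_split /=; apply: eq_bigr => m _.
rewrite (_ : (fun a => _) = fun a => al m a + be m a * t^-1); last first.
  by apply: funext => a; exact: (proj1 (affine_updD_all sigma_inj GB x dt_gt0 a m)).
rewrite Dof_updD -/cd; case: ifP => Hkm; first by rewrite qf_affine; field.
rewrite (_ : (fun a => _) = al m); last first.
  by apply: funext => a; rewrite be_eq0 ?mul0r ?addr0 // ltnNge Hkm.
by rewrite !mul0r add0r addr0 mul1r.
Qed.

Lemma Dof_powR_updD k dt : (forall k', k' != k -> 0 < dt k') ->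
  exists s P : R, 0 < s /\ 0 < P /\ forall t, 0 < t ->
    \prod_(m < p) Dof (updD dt k t) m `^ (delta m / 2) = t `^ s * P.
Proof.
move=> dt_gt0.
exists (\sum_(m < p) if (k <= m)%N then delta m / 2 else 0).
exists (\prod_(m < p) Dof_skip dt k m `^ (delta m / 2)).
split.
  apply: (@sum_ge0_gt0 _ _ _ k) => [m|]; rewrite ?leqnn ?divr_gt0 //.
  by case: ifP => // _; apply: divr_ge0; [exact: ltW | exact: ler0n].
split; first by apply: prodr_gt0 => m _; apply/powR_gt0/Dof_skip_gt0.
move=> t Ht; rewrite powR_sum // -big_split /=; apply: eq_bigr => m _.
rewrite Dof_updD powRM; first by case: ifP => _; rewrite ?powRr0 ?powR1.
  by case: ifP => _; [exact: ltW | exact: ler01].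
exact/ltW/Dof_skip_gt0.
Qed.

Lemma jdiag_prod_updD k dt : (forall k', k' != k -> 0 < dt k') ->
  exists (N : nat) (G : R), 0 < G /\ forall t,
    \prod_(a : AC) jdiag (updD dt k t) (val a) = t ^+ N * G.
Proof.
move=> dt_gt0.
pose grows (c : Cidx p) := match c with
  | inl ij => (k <= ij.2)%N | inr k' => (k < k')%N end.
pose skip (c : Cidx p) := match c with
  | inl ij => Dof_skip dt k ij.2 | inr k' => Dprev_skip dt k k' end.
exists #|[pred a : AC | grows (val a)]|, (\prod_(a : AC) skip (val a)); split.
  apply: prodr_gt0 => -[c Hc] _ /=; case: c {Hc} => [ij|k'] /=.
    exact: Dof_skip_gt0 dt_gt0 _.
  exact: Dprev_skip_gt0 dt_gt0 _.
move=> t; rewrite -prodr_const (big_mkcond (fun a : AC => grows (val a))) -big_split /=.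
apply: eq_bigr => -[c Hc] _ /=; case: c {Hc} => [ij|k'] /=; first by rewrite Dof_updD.
by rewrite Dprev_updD.
Qed.

Lemma gw_density_updD_gig_or_gamma k x dt : (forall k', k' != k -> 0 < dt k') ->
  exists alpha C : R, 0 < C /\
    ((exists a b : R, 0 < a /\ 0 < b /\ forall t : R, 0 < t ->
        gw_density sigma E U delta (x, updD dt k t)
        = C * t `^ alpha * expR (- (a * t) - b / t))
     \/
     (-1 < alpha /\ exists a : R, 0 < a /\ forall t : R, 0 < t ->
        gw_density sigma E U delta (x, updD dt k t)
        = C * t `^ alpha * expR (- (a * t)))).
Proof.
move=> dt_gt0.
have [A [B [C0 [HA [HB Htr]]]]] := trace_updD_inv_affine x dt_gt0.
have [s [P [Hs [HP Hpow]]]] := Dof_powR_updD dt_gt0.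
have [N [G [HG Hjac]]] := jdiag_prod_updD dt_gt0.
have Hdens (t : R) : 0 < t -> gw_density sigma E U delta (x, updD dt k t) =
    P * G * expR (- C0 / 2) * t `^ (s + N%:R) * expR (- (A / 2 * t) - B / 2 / t).
  move=> Ht; have HtN : t `^ (s + N%:R) = t `^ s * t ^+ N.
    rewrite powRD ?powR_mulrn ?ltW //.
    by apply/implyP => _; rewrite gt_eqF.
  rewrite gw_densityE Hpow // Htr // Hjac HtN gtr0_norm ?mulr_gt0 ?exprn_gt0 //.
  rewrite (_ : - _ / 2 = - C0 / 2 + (- (A / 2 * t) - B / 2 / t)) ?expRD; first by ring.
  by ring.
have HC : 0 < P * G * expR (- C0 / 2) by rewrite !mulr_gt0 // expR_gt0.
exists (s + N%:R), (P * G * expR (- C0 / 2)); split => //.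
have [HB0|HB0] := eqVneq B 0.
  right; split; first by have := ler0n R N; lra.
  exists (A / 2); split; first exact: divr_gt0.
  by move=> t Ht; rewrite Hdens // HB0 !mul0r subr0.
left; exists (A / 2), (B / 2); split; first exact: divr_gt0.
split; last exact: Hdens.
by apply: divr_gt0 => //; rewrite lt_neqAle eq_sym HB0.
Qed.

End Conditionals.

Theorem theorem3 (R : realType) (p : nat) (V : finType) (E : rel V)
  (sigma : V -> 'I_p) (U : 'M[R]_p) (delta : 'I_p -> R) :
  #|V| = p -> symmetric E -> irreflexive E ->
  GB_graph p E -> bijective sigma -> GB_ordering sigma E ->
  posdef U -> (forall i, 0 < delta i) ->
  (* (i) full conditionals of the independent entries L_ij are normal *)
  (forall i j : 'I_p, freeL sigma E i j ->
     forall (x : 'I_p -> 'I_p -> R) (dt : 'I_p -> R), (forall k, 0 < dt k) ->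
     exists mu s C : R, 0 < s /\ 0 < C /\
       forall t : R,
         gw_density sigma E U delta (updL x i j t, dt)
         = C * expR (- (t - mu) ^+ 2 / (2 * s)))
  /\
  (* (ii) full conditionals of Dtilde_k are GIG or Gamma *)
  (forall k : 'I_p,
     forall (x : 'I_p -> 'I_p -> R) (dt : 'I_p -> R),
     (forall k', k' != k -> 0 < dt k') ->
     exists alpha C : R, 0 < C /\
       ((exists a b : R, 0 < a /\ 0 < b /\
           forall t : R, 0 < t ->
             gw_density sigma E U delta (x, updD dt k t)
             = C * t `^ alpha * expR (- (a * t) - b / t))
        \/
        (-1 < alpha /\ exists a : R, 0 < a /\
           forall t : R, 0 < t ->
             gw_density sigma E U delta (x, updD dt k t)
             = C * t `^ alpha * expR (- (a * t))))).
Proof.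
move=> _ _ _ _ /bij_inj sigma_inj GB U_posdef delta_gt0; split.
- exact: gw_density_updL_gaussian.
- exact: gw_density_updD_gig_or_gamma.
Qed.
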